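(* Every palindromic composition $\beta$ is $\mathcal{L}$-unique; that is, if $\alpha$ is a composition with $\mathcal{L}(\alpha,\mathbf{x})=\mathcal{L}(\beta,\mathbf{x})$, then $\alpha=\beta$.
   Context: A composition is a finite nonempty sequence $\beta=\beta_1\cdots\beta_k$ of positive integers; it is a palindrome if $\beta_k\cdots\beta_1=\beta$. The type $\lambda(\alpha)$ of a composition is the partition obtained by sorting its parts in weakly decreasing order; for a partition $\lambda=\lambda_1\cdots\lambda_l$, $\mathbf{x}_\lambda=x_{\lambda_1}\cdots x_{\lambda_l}$ in commuting indeterminates $x_1,x_2,\ldots$. A composition $\alpha$ is a coarsening of $\beta$, $\alpha\succeq\beta$, if $\alpha$ arises from $\beta$ by summing blocks of consecutive parts. The $\mathcal{L}$-polynomial is $\mathcal{L}(\beta,\mathbf{x})=\sum_{\alpha\succeq\beta}\mathbf{x}_{\lambda(\alpha)}$. A composition $\beta$ is $\mathcal{L}$-unique if the set of compositions with the same $\mathcal{L}$-polynomial as $\beta$ equals $\{\beta,\text{reverse of }\beta\}$. *)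

From mathcomp Require Import all_boot.
Set Implicit Arguments. Unset Strict Implicit. Unset Printing Implicit Defensive.

Definition composition (b : seq nat) : bool := (b != [::]) && all (fun p => 0 < p) b.

Definition palindrome (b : seq nat) : Prop := rev b = b.

(* All coarsenings of b (compositions obtained by summing blocks of
   consecutive parts); one entry per choice of merged gaps, i.e. the list
   enumerates the set {a | a coarsening of b} without repetition. *)
Fixpoint coarsenings (b : seq nat) : seq (seq nat) :=
  match b with
  | [::] => [:: [::]]
  | a :: s =>
      flatten [seq (if c is c0 :: c' then [:: a :: c; (a + c0) :: c']
                    else [:: [:: a]]) | c <- coarsenings s]
  end.

Definition ptype (a : seq nat) : seq nat := sort geq a.

(* The L-polynomial L(b, x) = sum_{a coarsening of b} x_{lambda(a)},
   represented by its coefficient function on monomials x_lam, where the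
   monomial x_lam (lam a partition, i.e. a weakly decreasing seq of positive
   integers) is identified with lam; distinct partitions give distinct
   monomials, so this is exactly the polynomial. *)
Definition Lpoly (b : seq nat) : seq nat -> nat :=
  fun lam => count (fun a => ptype a == lam) (coarsenings b).

From mathcomp Require Import all_boot zify.

(* Only the coefficients of one- and two-part monomials are needed. The
   coefficient of x_n is 1 exactly when n is the total of b. The coefficient
   of x_{max(x,y)} x_{min(x,y)} counts the cuts of b into a prefix and a
   suffix with sums {x, y}; as parts are positive, at most one cut has a given
   prefix sum, so for x != y it is [splits b x y] + [splits b y x]. For a
   palindrome the two summands agree, so a sum of two 0/1 values for alpha
   equals twice one for beta, which forces alpha to split exactly as beta
   does. A composition is determined by its total and its proper prefix
   sums. *)

Lemma addn_eq_subn a b c : (a + b == c) = (a <= c) && (b == c - a).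
Proof.
apply/idP/idP => [/eqP <-|/andP[ac /eqP ->]]; last by rewrite subnKC.
by rewrite leq_addr addKn eqxx.
Qed.

Definition prepend_part (a : nat) (c : seq nat) : seq (seq nat) :=
  if c is c0 :: c' then [:: a :: c; (a + c0) :: c'] else [:: [:: a]].

Lemma coarsenings_cons a s :
  coarsenings (a :: s) = flatten [seq prepend_part a c | c <- coarsenings s].
Proof. by []. Qed.

Lemma count_nil_prepend a l :
  count (pred1 [::]) (flatten [seq prepend_part a c | c <- l]) = 0.
Proof. by elim: l => [|[|c0 c'] l IH]. Qed.

Lemma count_coarsenings_nil s :
  count (pred1 [::]) (coarsenings s) = (s == [::]).
Proof. by case: s => [|a s] //; rewrite coarsenings_cons count_nil_prepend. Qed.

Lemma count_single_prepend a l y :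
  count (pred1 [:: y]) (flatten [seq prepend_part a c | c <- l]) =
  (y == a) * count (pred1 [::]) l + (a <= y) * count (pred1 [:: y - a]) l.
Proof.
elim: l => [|[|c0 c'] l IH] /=; first by rewrite !muln0.
- rewrite IH !eqseq_cons !andbT.
  case: (eqVneq y a) => [->|ya] /=; first by rewrite leqnn subnn /=; lia.
  by case: (a <= y); lia.
- rewrite IH !eqseq_cons andbF /= addn_eq_subn.
  by case: (y == a); case: (a <= y); case: (c0 == y - a); case: (c' == [::]);
    lia.
Qed.

Lemma count_coarsenings_single s y :
  count (pred1 [:: y]) (coarsenings s) = (s != [::]) && (y == sumn s).
Proof.
elim: s y => [|a s IH] y //.
rewrite coarsenings_cons count_single_prepend count_coarsenings_nil IH.
case: s {IH} => [|c s] /=; first by rewrite muln1 muln0 !addn0.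
rewrite muln0 add0n [y == _ + _]eq_sym addn_eq_subn [_ + _ == y - a]eq_sym.
by case: (a <= y); rewrite ?mul1n.
Qed.

Lemma count_pair_prepend a l x y :
  count (pred1 [:: x; y]) (flatten [seq prepend_part a c | c <- l]) =
  (x == a) * count (pred1 [:: y]) l + (a <= x) * count (pred1 [:: x - a; y]) l.
Proof.
elim: l => [|[|c0 c'] l IH] /=; first by rewrite !muln0.
  by rewrite IH eqseq_cons andbF.
rewrite IH !eqseq_cons addn_eq_subn [a == x]eq_sym.
by case: (x == a); case: (a <= x); case: (c0 == x - a); case: (c' == [:: y]);
  case: (c0 :: c' == [:: y]); rewrite /= ?mul1n ?mul0n ?addn0 ?add0n; lia.
Qed.

Definition splits (b : seq nat) (x y : nat) : bool :=
  has (fun i => (x == sumn (take i b)) && (y == sumn (drop i b)))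
      (iota 1 (size b).-1).

Lemma splits_cons a s x y : splits (a :: s) x y =
  (s != [::]) && (x == a) && (y == sumn s) || (a <= x) && splits s (x - a) y.
Proof.
rewrite /splits /=; case: s => [|c s] /=; first by rewrite andbF.
rewrite -[2]/(1 + 1) iotaDl has_map addn0; congr (_ || _).
case: (leqP a x) => ax /=.
- apply: eq_has => i; rewrite /preim /= add0n.
  by apply/idP/idP => /andP[/eqP eq_x /eqP eq_y];
    apply/andP; split; apply/eqP; lia.
- apply/negbTE/hasPn => i _; rewrite /preim /= add0n.
  by apply/negP => /andP[/eqP ? _]; lia.
Qed.

Lemma splits0 s y : all (fun p => 0 < p) s -> splits s 0 y = false.
Proof.
case: s => [|c s] //= /andP[c0 _].
apply/negbTE/hasPn => -[|i]; rewrite mem_iota //= => _.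
by rewrite eq_sym eqn0Ngt addn_gt0 c0.
Qed.

Lemma count_coarsenings_pair b x y : all (fun p => 0 < p) b ->
  count (pred1 [:: x; y]) (coarsenings b) = splits b x y.
Proof.
elim: b x y => [|a s IH] x y // /andP[_ ps].
rewrite coarsenings_cons count_pair_prepend count_coarsenings_single IH //.
rewrite splits_cons.
case: (eqVneq x a) => [->|xa] /=.
- by rewrite leqnn subnn splits0 // andbT addn0 orbF mul1n.
- by rewrite mul0n add0n andbF /=; case: (_ <= _); case: (splits _ _ _).
Qed.

(* Reversal turns the cut after i parts into the cut after size b - i parts. *)
Lemma splits_rev b x y : splits (rev b) x y -> splits b y x.
Proof.
rewrite /splits size_rev => /hasP[i]; rewrite mem_iota => /andP[i1 i2].
rewrite take_rev drop_rev !sumn_rev => /andP[/eqP -> /eqP ->].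
by apply/hasP; exists (size b - i); rewrite ?mem_iota ?eqxx //; apply/andP; lia.
Qed.

Lemma splits_palindrome b x y : palindrome b -> splits b x y = splits b y x.
Proof.
by move=> pal; apply/idP/idP => split_xy; apply: splits_rev; rewrite pal.
Qed.

Lemma splits_head a s : splits (a :: s) a (sumn s) = (s != [::]).
Proof. by case: s => [|c s]; rewrite splits_cons !eqxx /= ?andbF. Qed.

Lemma splits_cons_leq a s x y : splits (a :: s) x y -> a <= x.
Proof. by rewrite splits_cons => /orP[/andP[/andP[_ /eqP ->]]|/andP[]]. Qed.

Lemma splits_cons_shift a s x y :
  0 < x -> splits (a :: s) (a + x) y = splits s x y.
Proof.
move=> x0; rewrite splits_cons addKn leq_addr.
have -> : (a + x == a) = false by apply/negbTE; lia.
by rewrite andbF.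
Qed.

Lemma splits_inj al be :
  all (fun p => 0 < p) al -> all (fun p => 0 < p) be ->
  sumn al = sumn be -> splits al =2 splits be -> al = be.
Proof.
elim: al be => [|a s IH] [|b t] //=.
- by move=> _ /andP[]; lia.
- by move=> /andP[]; lia.
move=> /andP[_ ps] /andP[_ pt] sum_eq split_eq.
have ab : a = b.
  have [s0|ns] := eqVneq s [::]; have [t0|nt] := eqVneq t [::].
  - by move: sum_eq; rewrite s0 t0 /= !addn0.
  - by move: (split_eq b (sumn t)); rewrite splits_head nt s0 /splits.
  - by move: (split_eq a (sumn s)); rewrite splits_head ns t0 /splits.
  have ba : b <= a.
    by apply: (@splits_cons_leq b t a (sumn s)); rewrite -split_eq splits_head.
  have : a <= b.
    by apply: (@splits_cons_leq a s b (sumn t)); rewrite split_eq splits_head.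
  by lia.
subst b; congr (_ :: _); apply: IH => // [|x y]; first by lia.
have [->|x0] := posnP x; first by rewrite !splits0.
by rewrite -(splits_cons_shift a s x y x0) -(splits_cons_shift a t x y x0).
Qed.

Lemma eq_ptype_size_neq a lam :
  size a != size lam -> (ptype a == lam) = (a == lam).
Proof.
move=> ne; have eq_false c : size c = size a -> (c == lam) = false.
  by move=> sz; apply: contraNF ne => /eqP <-; rewrite sz.
by rewrite !eq_false // size_sort.
Qed.

Lemma ptype_single a n : (ptype a == [:: n]) = (a == [:: n]).
Proof. by case: a => [|u [|v l]] //; apply: eq_ptype_size_neq. Qed.

Lemma ptype_pair a {p q} : q <= p ->
  (ptype a == [:: p; q]) = (a == [:: p; q]) || (a == [:: q; p]).
Proof.
move=> qp; case: a => [|u [|v [|w l]]] //.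
- by rewrite eq_ptype_size_neq // !eqseq_cons /= !andbF.
- rewrite /ptype /sort /=; case: ifP => vu /=; rewrite !eqseq_cons !andbT.
  + apply/idP/idP => [-> //|/orP[// |/andP[/eqP eu /eqP ev]]].
    by apply/andP; split; apply/eqP; lia.
  + apply/idP/idP => [/andP[-> ->]|/orP[/andP[/eqP eu /eqP ev]|/andP[-> ->] //]].
    * by rewrite orbT.
    * by move/negbT: vu; rewrite -ltnNge; lia.
- by rewrite eq_ptype_size_neq // !eqseq_cons /= !andbF.
Qed.

Lemma Lpoly_single b n : Lpoly b [:: n] = (b != [::]) && (n == sumn b).
Proof.
by rewrite /Lpoly (eq_count (ptype_single^~ n)) count_coarsenings_single.
Qed.

Lemma Lpoly_pair b x y : all (fun p => 0 < p) b ->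
  Lpoly b [:: maxn x y; minn x y] = splits b x y + (x != y) * splits b y x.
Proof.
move=> pb; wlog xy : x y / x <= y => [hw|].
  have [xy|yx] := boolP (x <= y); first exact: hw.
  rewrite maxnC minnC hw; last by rewrite leq_eqVlt ltnNge yx orbT.
  by have [-> //|_] := eqVneq y x; rewrite /= !mul1n addnC.
rewrite /Lpoly (maxn_idPr xy) (minn_idPl xy).
rewrite (eq_count (fun a => ptype_pair a xy)).
have [<-|ne] := eqVneq x y.
  by rewrite (eq_count (fun a => orbb _)) count_coarsenings_pair //= mul0n addn0.
have disjoint : predI (pred1 [:: y; x]) (pred1 [:: x; y]) =1 pred0.
  move=> a /=; apply/negP => /andP[/eqP -> /eqP [yx_eq _]].
  by rewrite yx_eq eqxx in ne.
rewrite /= mul1n -!count_coarsenings_pair // addnC -count_predUI.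
by rewrite (eq_count disjoint) count_pred0 addn0.
Qed.

Theorem proposition3p6 (alpha beta : seq nat) :
  composition alpha -> composition beta -> palindrome beta ->
  Lpoly alpha =1 Lpoly beta -> alpha = beta.
Proof.
case/andP=> na pa; case/andP=> nb pb pal L_eq.
have sum_eq : sumn alpha = sumn beta.
  by move: (L_eq [:: sumn beta]); rewrite !Lpoly_single na nb eqxx /=; case: eqP.
apply: splits_inj => // x y.
move: (L_eq [:: maxn x y; minn x y]).
rewrite !Lpoly_pair // (splits_palindrome _ y x pal).
by case: (x != y); case: (splits alpha x y); case: (splits alpha y x);
  case: (splits beta x y).
Qed.
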